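(* Let $T_{a_1\dots a_r}$ be a rank-$r$ tensor. Then $(T\,{}_i\!\times_i T)=0$ for all $i=1,\dots,r$ if and only if either $T=0$ or $T_{a_1\dots a_r}=k^{(1)}_{a_1}k^{(2)}_{a_2}\cdots k^{(r)}_{a_r}$ for some null vectors $k^{(1)},\dots,k^{(r)}$. Consequently, if $(T\,{}_i\!\times_i T)=0$ for all $i$, then $T\in\mathcal{DP}\cup-\mathcal{DP}$.
   Context: Lorentzian metric of signature $(+,-,\dots,-)$ with time orientation; null: $k\ne0$, $k\cdot k=0$; causal: $v\neq0$, $v\cdot v\ge0$. $(T\,{}_i\!\times_i T)$ is $T\otimes T$ with the $i$-th index of the first factor contracted with the $i$-th index of the second, other indices in order. $\mathcal{DP}$: tensors $X$ with $X_{a_1\dots a_r}u_1^{a_1}\cdots u_r^{a_r}\ge0$ for all causal future-pointing $u_j$; $-\mathcal{DP}$ their negatives. *)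

From HB Require Import structures.
From mathcomp Require Import all_boot all_order all_algebra.
From mathcomp Require Export reals.
Set Implicit Arguments. Unset Strict Implicit. Unset Printing Implicit Defensive.
Import Order.TTheory GRing.Theory Num.Theory.
Local Open Scope ring_scope.

(* Minkowski space R^{1,n}: indices 'I_n.+1, index ord0 is time.
   Metric eta = diag(+1,-1,...,-1) (equal to its inverse). *)
Definition eta {R : realType} {n : nat} (a : 'I_n.+1) : R :=
  if a == ord0 then 1 else -1.

Definition ldot {R : realType} {n : nat} (u v : 'I_n.+1 -> R) : R :=
  \sum_(a < n.+1) eta a * u a * v a.

Definition null_vec {R : realType} {n : nat} (k : 'I_n.+1 -> R) : Prop :=
  (exists a, k a != 0) /\ ldot k k = 0.

Definition causal_vec {R : realType} {n : nat} (v : 'I_n.+1 -> R) : Prop :=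
  (exists a, v a != 0) /\ 0 <= ldot v v.

Definition future_vec {R : realType} {n : nat} (v : 'I_n.+1 -> R) : Prop :=
  0 < v ord0.

Definition multi_index (n r : nat) := {ffun 'I_r -> 'I_n.+1}.
Definition tensor (R : realType) (n r : nat) := multi_index n r -> R.

Definition upd {n r : nat} (a : multi_index n r) (i : 'I_r) (c : 'I_n.+1)
  : multi_index n r := [ffun j => if j == i then c else a j].

(* components of (T _i x_i T): the i-th slot of the first factor contracted
   (with the metric) with the i-th slot of the second; the remaining indices
   are those of a (first factor) and b (second factor) other than slot i. *)
Definition contr_ii {R : realType} {n r : nat} (T : tensor R n r) (i : 'I_r)
  (a b : multi_index n r) : R :=
  \sum_(c < n.+1) eta c * T (upd a i c) * T (upd b i c).

Definition contr_ii_zero {R : realType} {n r : nat} (T : tensor R n r)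
  (i : 'I_r) : Prop := forall a b : multi_index n r, contr_ii T i a b = 0.

Definition eval_on {R : realType} {n r : nat} (X : tensor R n r)
  (u : 'I_r -> 'I_n.+1 -> R) : R :=
  \sum_(a : multi_index n r) X a * \prod_(j < r) u j (a j).

Definition DP {R : realType} {n r : nat} (X : tensor R n r) : Prop :=
  forall u : 'I_r -> 'I_n.+1 -> R,
    (forall j, causal_vec (u j) /\ future_vec (u j)) -> 0 <= eval_on X u.

(** A tensor all of whose self-contractions vanish is, slot by slot, a family of
    mutually orthogonal null covectors, and two orthogonal null covectors are
    parallel.  Hence swapping the [i]-th indices of two components does not
    change the product [T a * T b]; swapping the indices of a fixed nonzero
    component [T a0] into [a] one slot at a time factors [T] as a product of
    the null covectors [c |-> T (a0 with slot j set to c)].  Finally, a null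
    covector [k] pairs with every future causal vector with the sign of its
    time component [k_0], so a product of null covectors has constant sign on
    future causal arguments. *)

From Pilot Require Import Defs.
From HB Require Import structures.
From mathcomp Require Import all_boot all_order all_algebra reals.
From mathcomp Require Import ring lra.
Import Order.TTheory GRing.Theory Num.Theory.
Local Open Scope ring_scope.
Set Implicit Arguments. Unset Strict Implicit.

Section Minkowski.
Variables (R : realType) (n : nat).
Implicit Types (u v k : 'I_n.+1 -> R).

Lemma ldotE u v :
  ldot u v = u ord0 * v ord0 - \sum_(i < n) u (lift ord0 i) * v (lift ord0 i).
Proof.
rewrite /ldot big_ord_recl /Defs.eta eqxx mul1r; congr (_ + _).
rewrite -sumrN; apply: eq_bigr => i _.
by rewrite eq_sym (negbTE (neq_lift ord0 i)) mulN1r mulNr.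
Qed.

Lemma ldotZ (s t : R) u v :
  ldot (fun c => s * u c) (fun c => t * v c) = s * t * ldot u v.
Proof. by rewrite /ldot mulr_sumr; apply: eq_bigr => c _; ring. Qed.

Lemma isotropic_time0 u : ldot u u = 0 -> u ord0 = 0 -> forall c, u c = 0.
Proof.
rewrite ldotE => hu u0 c; move: hu; rewrite u0 mul0r sub0r => /eqP.
rewrite oppr_eq0 => /eqP /psumr_eq0P hsq.
case: (unliftP ord0 c) => [i ->| ->] //.
by apply/eqP; rewrite -sqrf_eq0 expr2; apply/eqP/hsq => // j _; rewrite -expr2 sqr_ge0.
Qed.

Lemma null_vec_time_neq0 k : null_vec k -> k ord0 != 0.
Proof.
case=> [[c kc] kk]; apply: contraNneq kc => k0.
by rewrite (isotropic_time0 kk k0).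
Qed.

(* [w := v_0 u - u_0 v] is isotropic with [w_0 = 0], hence vanishes. *)
Lemma isotropic_orth_parallel u v :
  ldot u u = 0 -> ldot v v = 0 -> ldot u v = 0 ->
  forall c d, u c * v d = u d * v c.
Proof.
move=> uu vv uv.
pose w c := v ord0 * u c - u ord0 * v c.
have ww : ldot w w = 0.
  have -> : ldot w w = v ord0 ^+ 2 * ldot u u - 2 * u ord0 * v ord0 * ldot u v
                       + u ord0 ^+ 2 * ldot v v.
    rewrite /ldot !mulr_sumr -sumrB -big_split /=.
    by apply: eq_bigr => c _; rewrite /w; ring.
  by rewrite uu vv uv !mulr0 subrr addr0.
have w0 : w ord0 = 0 by rewrite /w mulrC subrr.
have wE c : v ord0 * u c = u ord0 * v c.
  by apply/eqP; rewrite -subr_eq0; apply/eqP/(isotropic_time0 ww w0).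
have [u0 | u0] := eqVneq (u ord0) 0.
  by move=> c d; rewrite !(isotropic_time0 uu u0) !mul0r.
move=> c d; apply: (mulfI u0).
by rewrite mulrCA [RHS]mulrCA -!wE; ring.
Qed.

(* Cauchy-Schwarz on the spatial part:
   [0 <= sum_i (u_0 k_i + k_0 u_i)^2 <= 2 u_0 k_0 (k_0 u_0 + sum_i k_i u_i)]. *)
Lemma null_causal_pairing_sign k u :
  ldot k k = 0 -> 0 <= ldot u u -> 0 < u ord0 ->
  0 <= k ord0 * \sum_c k c * u c.
Proof.
rewrite !ldotE big_ord_recl => kk uu u0.
set K := \sum_(i < n) _ in kk; set U := \sum_(i < n) _ in uu.
set X := \sum_(i < n) _.
have sq_ge0 : 0 <= u ord0 ^+ 2 * K + 2 * u ord0 * k ord0 * X + k ord0 ^+ 2 * U.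
  have -> : u ord0 ^+ 2 * K + 2 * u ord0 * k ord0 * X + k ord0 ^+ 2 * U
      = \sum_(i < n) (u ord0 * k (lift ord0 i) + k ord0 * u (lift ord0 i)) ^+ 2.
    by rewrite /K /U /X !mulr_sumr -!big_split /=; apply: eq_bigr => i _; ring.
  by apply: sumr_ge0 => i _; exact: sqr_ge0.
have UK : 0 <= k ord0 ^+ 2 * (u ord0 * u ord0 - U) by rewrite mulr_ge0 ?sqr_ge0.
move: sq_ge0 UK; rewrite (_ : K = k ord0 * k ord0); last by lra.
clearbody X U K; move: (k ord0) (u ord0) u0 => a b b_gt0; nra.
Qed.

End Minkowski.

Section Tensors.
Variables (R : realType) (n r : nat).
Implicit Types (T : tensor R n r) (a b : multi_index n r) (i j : 'I_r).

Definition prod_tensor (k : 'I_r -> 'I_n.+1 -> R) : tensor R n r :=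
  fun a => \prod_(j < r) k j (a j).

Lemma upd_id a i : upd a i (a i) = a.
Proof. by apply/ffunP => j; rewrite ffunE; case: eqP => // ->. Qed.

Lemma upd_at a i c : upd a i c i = c.
Proof. by rewrite ffunE eqxx. Qed.

Lemma upd_upd a i c d : upd (upd a i c) i d = upd a i d.
Proof. by apply/ffunP => j; rewrite !ffunE; case: eqP. Qed.

Lemma prod_upd (k : 'I_r -> 'I_n.+1 -> R) a i c :
  \prod_(j < r) k j (upd a i c j) = k i c * \prod_(j < r | j != i) k j (a j).
Proof.
rewrite (bigD1 i) //= ffunE eqxx; congr (_ * _).
by apply: eq_bigr => j /negbTE ji; rewrite ffunE ji.
Qed.

Lemma contr_iiE T i a b :
  contr_ii T i a b = ldot (fun c => T (upd a i c)) (fun c => T (upd b i c)).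
Proof. by []. Qed.

Lemma contr_ii_prod_tensor T k i a b : T =1 prod_tensor k ->
  contr_ii T i a b = (\prod_(j < r | j != i) k j (a j))
                     * (\prod_(j < r | j != i) k j (b j)) * ldot (k i) (k i).
Proof.
move=> Tk; rewrite /contr_ii /ldot mulr_sumr; apply: eq_bigr => c _.
by rewrite !Tk /prod_tensor !prod_upd; ring.
Qed.

Lemma contr_ii_zero_prod_null T k i : T =1 prod_tensor k ->
  (forall j, null_vec (k j)) -> contr_ii_zero T i.
Proof.
move=> Tk kn a b; rewrite (contr_ii_prod_tensor _ _ _ Tk).
by case: (kn i) => _ ->; rewrite mulr0.
Qed.

(* The slices [c |-> T (upd a i c)] and [c |-> T (upd b i c)] are orthogonal null
   covectors, hence parallel; evaluate the proportionality at [a i] and [b i]. *)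
Lemma contr_ii_zero_swap T i a b : contr_ii_zero T i ->
  T a * T b = T (upd a i (b i)) * T (upd b i (a i)).
Proof.
move=> Ti; have := isotropic_orth_parallel (Ti a a) (Ti b b) (Ti a b) (a i) (b i).
by rewrite !upd_id.
Qed.

Definition splice a b (m : nat) : multi_index n r :=
  [ffun j : 'I_r => if (j < m)%N then a j else b j].

Lemma splice0 a b : splice a b 0 = b.
Proof. by apply/ffunP => j; rewrite ffunE ltn0. Qed.

Lemma splice_full a b : splice a b r = a.
Proof. by apply/ffunP => j; rewrite ffunE ltn_ord. Qed.

Lemma splice_at a b i : splice a b i i = b i.
Proof. by rewrite ffunE ltnn. Qed.

Lemma upd_splice a b i : upd (splice a b i) i (a i) = splice a b i.+1.
Proof.
apply/ffunP => j; rewrite !ffunE [(j < i.+1)%N]ltnS [(j <= i)%N]leq_eqVlt.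
case: (eqVneq j i) => [-> | /negPf ji]; first by rewrite eqxx.
by rewrite (ji : (j == i :> nat) = false).
Qed.

Lemma prod_ltnS (F : 'I_r -> R) m (lt_mr : (m < r)%N) :
  \prod_(j < r | (j < m.+1)%N) F j
  = F (Ordinal lt_mr) * \prod_(j < r | (j < m)%N) F j.
Proof.
rewrite (bigD1 (Ordinal lt_mr)) ?ltnSn //=; congr (_ * _); apply: eq_bigl => j.
rewrite [(j < m.+1)%N]ltnS [(j <= m)%N]leq_eqVlt.
case: (eqVneq j (Ordinal lt_mr)) => [-> | /negPf ji]; first by rewrite ltnn andbF.
by rewrite (ji : (j == m :> nat) = false) andbT.
Qed.

Section RankOne.
Variables (T : tensor R n r) (a0 : multi_index n r).
Hypothesis contrT : forall i, contr_ii_zero T i.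

Lemma splice_rank_one a m : (m <= r)%N ->
  T (splice a a0 m) * T a0 ^+ m
  = T a0 * \prod_(j < r | (j < m)%N) T (upd a0 j (a j)).
Proof.
elim: m => [_ | m IH lt_mr]; first by rewrite splice0 big_pred0 ?mulr1.
pose i := Ordinal lt_mr.
have swap : T (splice a a0 m.+1) * T a0 = T (splice a a0 m) * T (upd a0 i (a i)).
  have := contr_ii_zero_swap (splice a a0 i) (upd a0 i (a i)) (contrT i).
  by rewrite upd_at upd_upd splice_at upd_id upd_splice => ->.
rewrite (prod_ltnS _ lt_mr) -/i exprS mulrA swap mulrAC IH 1?ltnW //.
by rewrite mulrAC mulrA.
Qed.

Lemma rank_one_identity a :
  T a * T a0 ^+ r = T a0 * \prod_(j < r) T (upd a0 j (a j)).
Proof.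
rewrite -{1}(splice_full a a0) splice_rank_one //; congr (_ * _).
by apply: eq_bigl => j; rewrite ltn_ord.
Qed.

(* Rescale the slices through [a0] so that their product reproduces [T]:
   one slice keeps the factor [T a0], every slice is divided by it. *)
Lemma prod_null_of_contr_ii_zero : (0 < r)%N -> T a0 != 0 ->
  exists k, (forall j, null_vec (k j)) /\ T =1 prod_tensor k.
Proof.
move=> r_gt0 Ta0; pose s j := if j == Ordinal r_gt0 then T a0 else 1.
have s_neq0 j : s j != 0 by rewrite /s; case: ifP; rewrite ?oner_neq0.
exists (fun j c => s j / T a0 * T (upd a0 j c)); split => [j | a].
  split; last by rewrite (ldotZ (s j / T a0) (s j / T a0)) -contr_iiE contrT mulr0.
  by exists (a0 j); rewrite upd_id !mulf_neq0 ?invr_eq0.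
rewrite /prod_tensor big_split /= prodf_div prodr_const card_ord.
have -> : \prod_(j < r) s j = T a0.
  by rewrite (bigD1 (Ordinal r_gt0)) //= /s eqxx big1 ?mulr1 // => j /negbTE ->.
by rewrite mulrAC -rank_one_identity mulfK // expf_neq0.
Qed.

End RankOne.

Lemma eval_on_prod_tensor T k (u : 'I_r -> 'I_n.+1 -> R) : T =1 prod_tensor k ->
  eval_on T u = \prod_(j < r) \sum_(c < n.+1) k j c * u j c.
Proof.
move=> Tk; rewrite bigA_distr_bigA /eval_on; apply: eq_bigr => a _.
by rewrite Tk -big_split.
Qed.

Lemma eval_onN T u : eval_on (fun a => - T a) u = - eval_on T u.
Proof. by rewrite /eval_on -sumrN; apply: eq_bigr => a _; rewrite mulNr. Qed.

Lemma DP_tensor0 T : (forall a, T a = 0) -> DP T.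
Proof. by move=> T0 u _; rewrite /eval_on big1 // => a _; rewrite T0 mul0r. Qed.

(* On future causal arguments [T] has the sign of the nonzero [\prod_j k j ord0]. *)
Lemma DP_prod_null T k : T =1 prod_tensor k -> (forall j, null_vec (k j)) ->
  DP T \/ DP (fun a => - T a).
Proof.
move=> Tk kn.
have sign_eval u : (forall j, causal_vec (u j) /\ future_vec (u j)) ->
    0 <= (\prod_(j < r) k j ord0) * eval_on T u.
  move=> uc; rewrite (eval_on_prod_tensor _ Tk) -big_split /=.
  apply: prodr_ge0 => j _; have [[_ uu] u0] := uc j.
  by case: (kn j) => _ kk; exact: null_causal_pairing_sign.
have : \prod_(j < r) k j ord0 != 0.
  by apply/prodf_neq0 => j _; exact: null_vec_time_neq0.
rewrite neq_lt => /orP [neg | pos].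
  by right => u uc; rewrite eval_onN oppr_ge0 -(nmulr_rge0 _ neg) sign_eval.
by left => u uc; rewrite -(pmulr_rge0 _ pos) sign_eval.
Qed.

End Tensors.

Theorem mainTheorem15 (R : realType) (n r : nat) (hr : (0 < r)%N)
  (T : tensor R n r) :
  ((forall i : 'I_r, contr_ii_zero T i) <->
     ((forall a, T a = 0) \/
      exists k : 'I_r -> 'I_n.+1 -> R,
        (forall j, null_vec (k j)) /\
        forall a : multi_index n r, T a = \prod_(j < r) k j (a j)))
  /\
  ((forall i : 'I_r, contr_ii_zero T i) ->
     DP T \/ DP (fun a => - T a)).
Proof.
have classify : (forall i : 'I_r, contr_ii_zero T i) ->
    (forall a, T a = 0) \/ exists k, (forall j, null_vec (k j)) /\ T =1 prod_tensor k.
  move=> contrT; have [/existsP [a0 Ta0] | /existsPn T0] := boolP [exists a, T a != 0].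
    by right; exact: prod_null_of_contr_ii_zero contrT hr Ta0.
  by left => a; apply/eqP; rewrite -[_ == _]negbK T0.
split; first split.
- exact: classify.
- case=> [T0 i a b | [k [kn Tk]] i]; last exact: contr_ii_zero_prod_null kn.
  by rewrite /contr_ii big1 // => c _; rewrite !T0 mulr0.
- move/classify => [T0 | [k [kn Tk]]]; first by left; exact: DP_tensor0.
  exact: DP_prod_null kn.
Qed.
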